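(* Let $(K,w_K)$ be an $(n+1)$-dimensional simplicial complex with $w_K\equiv 1$ on a vertex set $V$, and let $(H,w_H)$ be an $(n+1)$-dimensional subcomplex with $w_H\equiv 1$ on the faces of $H$, such that their proper difference $(L,w_L)$ exists, i.e. $L=K$ as simplicial complexes, $w_L=w_K-w_H$ (so $w_L=0$ on faces of $H$ and $w_L=1$ on the other faces of $K$), and $\{F\in K: w_L(F)>0\}$ is a simplicial complex. Let $N=|S_n(K)|$ and let $\lambda_1\le\dots\le\lambda_N$ and $\theta_1\le\dots\le\theta_N$ be the eigenvalues of $\mathcal{L}^{up}_n(K,w_K)$ (the combinatorial up-Laplacian of $K$) and $\mathcal{L}^{up}_n(L,w_L)$, respectively. Put $D_{\mathcal{W}}=\dim C^{n+1}(H,\mathbb{R})-\dim H^{n+1}(H,\mathbb{R})$ and $D_H=\dim C^n(H,\mathbb{R})$, and use the conventions $\lambda_j=0$ for $1-D_{\mathcal{W}}\le j\le 0$ and $\lambda_j=|V|$ for $N+1\le j\le N+D_H$. Then for all $k=1,\dots,N$, $$\lambda_{k-D_{\mathcal{W}}}\le\theta_k\le\lambda_{k+D_H}.$$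
   Context: $S_j(K)$ is the set of $j$-faces of $K$; $C^j(K,\mathbb{R})$ is the space of real cochains on oriented $j$-faces (antisymmetric under orientation reversal), with coboundary $(\delta_j f)([v_0,\dots,v_{j+1}])=\sum_i(-1)^i f([v_0,\dots,\hat v_i,\dots,v_{j+1}])$. For a weight function $w\ge 0$ on faces, $C^j$ carries $(f,g)=\sum_{F\in S_j}w(F)f([F])g([F])$, and the formal adjoint is $(\delta_j^*\bar f)([F])=\sum_{\bar F\supset F,\ \bar F\in S_{j+1}}\frac{w(\bar F)}{w(F)}\mathrm{sgn}([F],\partial[\bar F])\bar f([\bar F])$ if $w(F)\neq0$ and $0$ otherwise, where $\mathrm{sgn}([v_0,\dots,\hat v_i,\dots,v_{j+1}],\partial[v_0,\dots,v_{j+1}])=(-1)^i$. The up-Laplacian is $\mathcal{L}^{up}_n(K,w)=\delta_n^*\delta_n$ on $C^n(K,\mathbb{R})$; a weight function with zeros gives a degenerate weighted complex. $H^{n+1}(H,\mathbb{R})$ is simplicial cohomology with real coefficients. *)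

From mathcomp Require Import all_boot all_order all_algebra.
Set Implicit Arguments. Unset Strict Implicit. Unset Printing Implicit Defensive.
Import Order.TTheory GRing.Theory Num.Theory.
Local Open Scope ring_scope.

Section SimplicialDefs.
Variable T : finType.

Definition is_complex (K : {set {set T}}) : Prop :=
  set0 \notin K /\
  forall F G : {set T}, F \in K -> G \subset F -> G != set0 -> G \in K.

Definition has_dim (K : {set {set T}}) (d : nat) : Prop :=
  (forall F, F \in K -> (#|F| <= d.+1)%N) /\ exists2 F, F \in K & #|F| = d.+1.

Definition faces (K : {set {set T}}) (j : nat) : {set {set T}} :=
  [set F in K | #|F| == j.+1].

(* Orientation: every face is oriented by the fixed total order enum_rank on T.
   pos v Fb = index of v in the increasing enumeration of Fb. *)
Definition pos (v : T) (Fb : {set T}) : nat :=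
  #|[set u in Fb | (enum_rank u < enum_rank v)%N]|.

(* sgn([F], d[Fb]) if F is a facet of Fb, and 0 otherwise. *)
Definition inc (R : nzRingType) (Fb F : {set T}) : R :=
  if (F \subset Fb) && (#|Fb| == #|F|.+1)
  then \sum_(v in Fb :\: F) (-1) ^+ pos v Fb
  else 0.

Definition cobound_mx (R : nzRingType) (K : {set {set T}}) (j : nat)
  : 'M[R]_(#|faces K j.+1|, #|faces K j|) :=
  \matrix_(a, b) inc R (enum_val a) (enum_val b).

(* dim H^{j+1}(K,R) = dim ker delta_{j+1} - dim im delta_j. *)
Definition dim_cohom (R : fieldType) (K : {set {set T}}) (j : nat) : nat :=
  (#|faces K j.+1| - \rank (cobound_mx R K j.+1) - \rank (cobound_mx R K j))%N.

Definition up_laplacian (R : fieldType) (K : {set {set T}}) (w : {set T} -> R)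
  (n : nat) : 'M[R]_(#|faces K n|) :=
  \matrix_(a, b)
    let F := enum_val a in let G := enum_val b in
    if w F != 0 then
      \sum_(Fb in faces K n.+1) w Fb / w F * inc R Fb F * inc R Fb G
    else 0.

(* lam : 'I_N -> R seen as lam_1 <= ... <= lam_N (1-based), extended by
   lam_j = 0 for j <= 0 and lam_j = top for j > N. *)
Definition ext_eig (R : nzRingType) (N : nat) (lam : 'I_N -> R) (top : R)
  (j : int) : R :=
  match j with
  | Posz m => if m is m'.+1 then
                (if insub m' is Some i then lam i else top)
              else 0
  | Negz _ => 0
  end.

Definition sorted_eigs (R : realFieldType) (N : nat) (A : 'M[R]_N)
  (lam : 'I_N -> R) : Prop :=
  char_poly A = \prod_(i < N) ('X - (lam i)%:P) /\
  (forall i j : 'I_N, (i <= j)%N -> lam i <= lam j).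

End SimplicialDefs.

From mathcomp Require Import all_boot all_order all_algebra perm.
From mathcomp Require Import zify.
Set Implicit Arguments. Unset Strict Implicit. Unset Printing Implicit Defensive.
Import Order.TTheory GRing.Theory Num.Theory.
Local Open Scope ring_scope.

(* The n-faces of K split into those of H and the rest. Since H and the faces of K
   outside H are both closed under taking subfaces, no (n+1)-face of K has one facet
   in H and another outside H, so in this splitting both up-Laplacians are block
   diagonal. The two blocks on the faces outside H coincide; the block of L on the
   faces of H vanishes, whereas that of K is the Gram matrix of the coboundary
   delta_H, of rank D_W because H has no (n+2)-faces, so it has at least D_H - D_W
   zero eigenvalues. Every eigenvalue of the common block lies in [0, |V|], since on
   the full simplex over V the up- and down-Laplacians add up to |V| times the
   identity. The interlacing inequalities then follow by counting, in both spectra,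
   the eigenvalues below a given threshold. *)

Lemma card_ord_ltn N k : (k <= N)%N -> #|[pred i : 'I_N | (i < k)%N]| = k.
Proof.
move=> kN; rewrite -[RHS](size_iota 0) -(filter_iota_ltn 0 kN) size_filter.
rewrite -val_enum_ord count_map cardE /enum_mem size_filter.
by rewrite (eq_filter (a2 := predT)) // filter_predT.
Qed.

Lemma count_map_enum (T : finType) (U : Type) (f : T -> U) (P : pred U) :
  count P [seq f i | i <- enum T] = #|[pred i | P (f i)]|.
Proof. by rewrite count_map cardE -size_filter /enum_mem filter_predT. Qed.

Section SortedCount.
Variables (R : realFieldType) (N : nat) (f : 'I_N -> R).
Hypothesis f_sorted : forall i j : 'I_N, (i <= j)%N -> f i <= f j.

Lemma sorted_le_count (j : 'I_N) c : (f j <= c) = (j < #|[pred i | (f i <= c)%R]|)%N.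
Proof.
apply/idP/idP => [fjc|].
  rewrite -[j.+1](card_ord_ltn (ltn_ord j)); apply/subset_leq_card/subsetP => i.
  by rewrite !inE ltnS => /f_sorted /le_trans; apply.
apply: contraTT; rewrite -ltNge -leqNgt => cfj.
rewrite -[X in (_ <= X)%N](card_ord_ltn (ltnW (ltn_ord j))).
apply/subset_leq_card/subsetP => i; rewrite !inE; apply: contraTT.
by rewrite -leqNgt -ltNge => /f_sorted /(lt_le_trans cfj).
Qed.

Lemma sorted_ge_count (j : 'I_N) c : (c <= f j) = (#|[pred i | (f i < c)%R]| <= j)%N.
Proof.
apply/idP/idP => [cfj|].
  rewrite -[X in (_ <= X)%N](card_ord_ltn (ltnW (ltn_ord j))).
  apply/subset_leq_card/subsetP => i; rewrite !inE; apply: contraTT.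
  by rewrite -leqNgt -leNgt => /f_sorted /(le_trans cfj).
apply: contraTT; rewrite -ltNge -ltnNge => fjc.
rewrite -[j.+1](card_ord_ltn (ltn_ord j)); apply/subset_leq_card/subsetP => i.
by rewrite !inE ltnS => /f_sorted /le_lt_trans; apply.
Qed.

End SortedCount.

Section ExtendedEigenvalues.
Variables (R : nzRingType) (N : nat) (lam : 'I_N -> R) (top : R).

Lemma ext_eig_le0 (j : int) : (j <= 0)%R -> ext_eig lam top j = 0.
Proof. by case: j => [[|m]|m]. Qed.

Lemma ext_eig_ord (i : 'I_N) : ext_eig lam top i.+1%:Z = lam i.
Proof. by rewrite /ext_eig valK. Qed.

Lemma ext_eig_top (m : nat) : (N <= m)%N -> ext_eig lam top m.+1%:Z = top.
Proof. by move=> Nm; rewrite /ext_eig insubF // ltnNge Nm. Qed.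

End ExtendedEigenvalues.

(* [lam] is the spectrum [as_ ++ bs] and [theta] is obtained by replacing the block
   [as_], which has at least [p - d] zero eigenvalues, by [p] zeros. *)
Section Interlacing.
Variables (R : realFieldType) (N : nat) (lam theta : 'I_N -> R).
Variables (as_ bs : seq R) (p d : nat) (top : R).
Hypotheses (lam_sorted : forall i j : 'I_N, (i <= j)%N -> lam i <= lam j)
           (theta_sorted : forall i j : 'I_N, (i <= j)%N -> theta i <= theta j).
Hypotheses (lam_spec : perm_eq [seq lam i | i <- enum 'I_N] (as_ ++ bs))
           (theta_spec : perm_eq [seq theta i | i <- enum 'I_N] (nseq p 0 ++ bs)).
Hypothesis bs_range : {in bs, forall x, 0 <= x <= top}.

Let card_lam (P : pred R) : #|[pred i | P (lam i)]| = (count P as_ + count P bs)%N.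
Proof. by rewrite -count_map_enum (seq.permP lam_spec) count_cat. Qed.

Let card_theta (P : pred R) :
  #|[pred i | P (theta i)]| = (count P (nseq p 0%R) + count P bs)%N.
Proof. by rewrite -count_map_enum (seq.permP theta_spec) count_cat. Qed.

Let theta_ge0 k : 0 <= theta k.
Proof.
have : theta k \in nseq p 0 ++ bs by rewrite -(perm_mem theta_spec) map_f ?mem_enum.
by rewrite mem_cat mem_nseq => /orP[/andP[_ /eqP ->]|/bs_range/andP[]].
Qed.

Lemma interlacing_lower (k : 'I_N) :
  (p - d <= count_mem 0%R as_)%N -> ext_eig lam 0 (k.+1%:Z - d%:Z) <= theta k.
Proof.
move=> zeros_as; have [dk|kd] := leqP d k; last first.
  by rewrite ext_eig_le0 ?theta_ge0 // subr_le0 lez_nat.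
have j_lt : (k - d < N)%N by rewrite (leq_ltn_trans (leq_subr _ _)).
rewrite subzn ?(leqW dk) // subSn // -[(k - d)%N]/(val (Ordinal j_lt)) ext_eig_ord.
rewrite sorted_le_count // (card_lam (<= theta k)) /=.
have := sorted_le_count theta_sorted k (theta k).
rewrite lexx (card_theta (<= theta k)) count_nseq /= theta_ge0 mul1n => /esym.
have zeros_le : (count_mem 0%R as_ <= count (<= theta k) as_)%N.
  by apply: sub_count => x /= /eqP ->; exact: theta_ge0.
move: zeros_as zeros_le; set Z := count_mem _ _; set A := count _ as_; set B := count _ bs.
lia.
Qed.

Hypothesis size_as : size as_ = p.

Lemma interlacing_upper (k : 'I_N) :
  0 <= top -> theta k <= ext_eig lam top (k.+1%:Z + p%:Z).
Proof.
move=> top_ge0; rewrite -PoszD addSn; have [kp_lt|kp_ge] := ltnP (k + p) N.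
  rewrite -[(k + p)%N]/(val (Ordinal kp_lt)) ext_eig_ord.
  rewrite sorted_ge_count // (card_lam (< theta k)) /=.
  have := sorted_ge_count theta_sorted k (theta k).
  rewrite lexx (card_theta (< theta k)) => /esym /(leq_trans (leq_addl _ _)) lt_bs.
  by rewrite addnC leq_add // -size_as count_size.
rewrite ext_eig_top //.
have : theta k \in nseq p 0 ++ bs by rewrite -(perm_mem theta_spec) map_f ?mem_enum.
by rewrite mem_cat mem_nseq => /orP[/andP[_ /eqP ->]|/bs_range/andP[]].
Qed.

End Interlacing.

Section CharPoly.
Variable F : fieldType.

Lemma char_poly_similar n (A P Q : 'M[F]_n) :
  P *m Q = 1%:M -> Q *m P = 1%:M -> char_poly (P *m A *m Q) = char_poly A.
Proof.
move=> PQ QP; rewrite /char_poly /char_poly_mx.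
have -> : 'X%:M - map_mx polyC (P *m A *m Q) =
    map_mx polyC P *m ('X%:M - map_mx polyC A) *m map_mx polyC Q.
  rewrite mulmxBr mulmxBl !map_mxM; congr (_ - _).
  by rewrite mul_mx_scalar -scalemxAl -map_mxM PQ map_mx1 scalemx1.
rewrite !det_mulmx !det_map_mx mulrC mulrA -rmorphM -det_mulmx QP.
by rewrite det1 rmorph1 mul1r.
Qed.

Lemma char_poly_reindex m n (A : 'M[F]_n) (B : 'M[F]_m) (f : 'I_m -> 'I_n) :
  m = n -> injective f -> (forall i j, B i j = A (f i) (f j)) ->
  char_poly B = char_poly A.
Proof.
move=> emn; subst m => f_inj BE; pose s := perm f_inj.
have -> : B = perm_mx s *m A *m perm_mx s^-1.
  by rewrite -col_permE -row_permE; apply/matrixP => i j; rewrite !mxE !permE BE.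
by apply: char_poly_similar; rewrite -perm_mxM ?mulgV ?mulVg perm_mx1.
Qed.

Lemma char_poly_dvd_zero_cols p (B : 'M[F]_p) (S : {set 'I_p}) :
  (forall i j, j \in S -> B i j = 0) -> 'X ^+ #|S| %| char_poly B.
Proof.
elim: p B S => [|p IH] B S B0.
  by rewrite (_ : S = set0) ?cards0 ?expr0 ?dvd1p //; apply/setP => -[].
have [->|[j jS]] := set_0Vmem S; first by rewrite cards0 expr0 dvd1p.
have expand_j : char_poly B = 'X * char_poly (row' j (col' j B)).
  rewrite /char_poly (expand_det_col _ j) (bigD1 j) //= big1 ?addr0.
    rewrite /cofactor row'_col'_char_poly_mx !mxE eqxx B0 // subr0 mulr1n.
    by rewrite -signr_odd oddD addbb mul1r.
  by move=> i /negPf ij; rewrite !mxE ij B0 // subr0 mulr0n mul0r.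
pose S' := [set k | lift j k \in S].
have card_S : #|S| = #|S'|.+1.
  rewrite (cardsD1 j S) jS add1n -(card_imset _ (@lift_inj _ j)); congr _.+1.
  apply: eq_card => x; rewrite !inE; apply/andP/imsetP => [[xj xS]|[k]].
    case: (unliftP j x) xj xS => [k ->|->]; rewrite ?eqxx // => _ kS.
    by exists k; rewrite ?inE.
  by rewrite inE => kS ->; rewrite eq_sym neq_lift.
rewrite expand_j card_S exprS dvdp_mul2l ?polyX_eq0 //; apply: IH => i k.
by rewrite inE !mxE => /B0 ->.
Qed.

Lemma char_poly_dvd_rank p (A : 'M[F]_p) : 'X ^+ (p - \rank A) %| char_poly A.
Proof.
set r := \rank A; set U := row_ebase A.
rewrite -(@char_poly_similar _ A U (invmx U)) ?mulmxV ?mulVmx ?row_ebase_unit //.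
have -> : U *m A *m invmx U = (U *m col_ebase A) *m pid_mx r.
  by rewrite -{1}(mulmx_ebase A) !mulmxA mulmxK ?row_ebase_unit.
have -> : (p - r)%N = #|[set j : 'I_p | (r <= j)%N]|.
  rewrite -[X in (_ - X)%N](card_ord_ltn (rank_leq_col A : (r <= p)%N)).
  rewrite -{1}(card_ord p) -(cardC [pred i : 'I_p | (i < r)%N]) addKn.
  by apply: eq_card => j; rewrite !inE -leqNgt.
apply: char_poly_dvd_zero_cols => i j; rewrite inE => rj.
rewrite mxE big1 // => k _; rewrite [pid_mx _ _ _]mxE.
by case: eqP => [->|_]; rewrite ?ltnNge ?rj mulr0.
Qed.

Lemma char_poly0 n : char_poly (0 : 'M[F]_n) = \prod_(x <- nseq n 0) ('X - x%:P).
Proof.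
rewrite char_poly_trig ?mx0_is_trig // big_nseq iter_mulr_1.
by rewrite -[in RHS](card_ord n) -prodr_const; apply: eq_bigr => i _; rewrite mxE.
Qed.

Lemma prod_XsubC_split (s : seq F) (p q : {poly F}) :
  p \is monic -> q \is monic -> p * q = \prod_(x <- s) ('X - x%:P) ->
  exists sp sq, [/\ p = \prod_(x <- sp) ('X - x%:P),
                    q = \prod_(x <- sq) ('X - x%:P) & perm_eq s (sp ++ sq)].
Proof.
move=> p_monic q_monic pqE.
have /(@dvdp_prod_XsubC _ _ _ id)[mp] : p %| \prod_(x <- s) ('X - x%:P).
  by rewrite -pqE dvdp_mulr.
rewrite eqp_monic ?monic_prod_XsubC // => /eqP pE.
have /(@dvdp_prod_XsubC _ _ _ id)[mq] : q %| \prod_(x <- s) ('X - x%:P).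
  by rewrite -pqE dvdp_mull.
rewrite eqp_monic ?monic_prod_XsubC // => /eqP qE.
exists (mask mp s), (mask mq s); split => //.
by apply: prod_XsubC_eq; rewrite big_cat -pqE pE qE.
Qed.

Definition kernel_mx (T : finType) (Phi : T -> T -> F) (S : {set T}) : 'M[F]_#|S| :=
  \matrix_(a, b) Phi (enum_val a) (enum_val b).

Lemma eq_kernel_mx (T : finType) (Phi Psi : T -> T -> F) (S : {set T}) :
  {in S &, Phi =2 Psi} -> kernel_mx Phi S = kernel_mx Psi S.
Proof. by move=> ePhi; apply/matrixP => a b; rewrite !mxE ePhi ?enum_valP. Qed.

Lemma char_poly_kernel_mx_split (T : finType) (Phi : T -> T -> F) (S S1 : {set T}) :
  S1 \subset S ->
  (forall x y, x \in S1 -> y \in S :\: S1 -> Phi x y = 0 /\ Phi y x = 0) ->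
  char_poly (kernel_mx Phi S) =
    char_poly (kernel_mx Phi S1) * char_poly (kernel_mx Phi (S :\: S1)).
Proof.
move=> sub cross; set S2 := S :\: S1.
pose g (i : 'I_(#|S1| + #|S2|)) : T :=
  match split i with inl a => enum_val a | inr b => enum_val b end.
have gS i : g i \in S.
  rewrite /g; case: (split i) => a; first exact: (subsetP sub _ (enum_valP a)).
  by have := enum_valP a; rewrite inE => /andP[].
have g_inj : injective g.
  move=> i j; rewrite -[i]splitK -[j]splitK /g !unsplitK.
  case: (split i) => a; case: (split j) => b /=.
  - by move/enum_val_inj ->.
  - by move=> e; have := enum_valP b; rewrite -e inE (enum_valP a).
  - by move=> e; have := enum_valP a; rewrite e inE (enum_valP b).
  - by move/enum_val_inj ->.
pose f i := enum_rank_in (gS i) (g i).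
have fE i : enum_val (f i) = g i by rewrite enum_rankK_in.
have f_inj : injective f by move=> i j /(congr1 enum_val); rewrite !fE => /g_inj.
have card_S : (#|S1| + #|S2| = #|S|)%N by rewrite -(cardsID S1 S) (setIidPr sub).
rewrite -(char_poly_reindex card_S f_inj
  (B := block_mx (kernel_mx Phi S1) 0 0 (kernel_mx Phi S2))); last first.
  move=> i j; rewrite [in RHS]mxE !fE -[i]splitK -[j]splitK /g !unsplitK.
  case: (split i) => a; case: (split j) => b /=.
  - by rewrite block_mxEul mxE.
  - by rewrite block_mxEur mxE; case: (cross _ _ (enum_valP a) (enum_valP b)).
  - by rewrite block_mxEdl mxE; case: (cross _ _ (enum_valP b) (enum_valP a)).
  - by rewrite block_mxEdr mxE.
by rewrite /char_poly char_block_diag_mx det_ublock.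
Qed.

End CharPoly.

Lemma eigenvalue_form_bounds (R : realFieldType) p (A : 'M[R]_p) (c x : R) :
  (forall u : 'rV_p, 0 <= (u *m A *m u^T) 0 0 <= c * (u *m u^T) 0 0) ->
  eigenvalue A x -> 0 <= x <= c.
Proof.
move=> form_bounds /eigenvalueP[u uA u_neq0].
have := form_bounds u; rewrite uA -scalemxAl mxE.
have u_pos : 0 < (u *m u^T) 0 0.
  have -> : (u *m u^T) 0 0 = \sum_j u 0 j ^+ 2.
    by rewrite mxE; apply: eq_bigr => j _; rewrite mxE expr2.
  rewrite lt_def sumr_ge0 ?andbT => [|j _]; last exact: sqr_ge0.
  apply: contra u_neq0 => /eqP/psumr_eq0P u0; apply/eqP/rowP => j.
  by apply/eqP; rewrite mxE -sqrf_eq0 u0 // => i _; exact: sqr_ge0.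
by rewrite pmulr_lge0 // ler_pM2r.
Qed.

Section FullSimplex.
Variables (R : realFieldType) (V : finType).
Implicit Types (u v w : V) (E F X Y Fb : {set V}) (g : {set V} -> R).

Definition face_sign v X : R := (-1) ^+ pos v X.

Lemma face_sign_sqr v X : face_sign v X ^+ 2 = 1.
Proof. by rewrite /face_sign sqrr_sign. Qed.

Lemma pos_setU1 u v X : u \notin X ->
  pos v (u |: X) = (pos v X + (enum_rank u < enum_rank v))%N.
Proof.
move=> uX; rewrite /pos.
have -> : [set x in u |: X | (enum_rank x < enum_rank v)%N] =
    if (enum_rank u < enum_rank v)%N then u |: [set x in X | (enum_rank x < enum_rank v)%N]
    else [set x in X | (enum_rank x < enum_rank v)%N].
  apply/setP => x; case: ifP => uv; rewrite !inE; case: eqVneq => [->|] //=.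
  by rewrite uv ?andbF ?(negbTE uX).
by case: ifP => _; rewrite ?addn0 // cardsU1 inE (negbTE uX) addnC.
Qed.

Lemma pos_setU1_self v X : pos v (v |: X) = pos v X.
Proof.
by apply: eq_card => x; rewrite !inE; case: eqVneq => [->|] /=; rewrite ?ltnn ?andbF.
Qed.

(* Moving u in front of v flips exactly one of the two position counts. *)
Lemma face_sign_swap u v E : u != v -> u \notin E -> v \notin E ->
  face_sign v (v |: (u |: E)) * face_sign u (v |: (u |: E)) =
  - (face_sign u (u |: E) * face_sign v (v |: E)).
Proof.
move=> uv uE vE; have vuE : v \notin u |: E by rewrite !inE negb_or eq_sym uv.
rewrite /face_sign (pos_setU1 u vuE) !pos_setU1_self (pos_setU1 v uE) -!exprD.
have : ((enum_rank u < enum_rank v) + (enum_rank v < enum_rank u) = 1)%N.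
  have : enum_rank u != enum_rank v by rewrite (inj_eq enum_rank_inj).
  by rewrite neq_ltn; case: ltngtP.
set a := (_ < _)%N; set b := (_ < _)%N => ab.
have -> : (pos v E + a + (pos u E + b) = (pos u E + pos v E).+1)%N by lia.
by rewrite exprS mulN1r.
Qed.

Lemma inc_setD1 v Fb : v \in Fb -> inc R Fb (Fb :\ v) = face_sign v Fb.
Proof.
move=> vFb; rewrite /inc subD1set (cardsD1 v Fb) vFb eqxx /=.
by rewrite setDDr setDv set0U (setIidPr _) ?sub1set // big_set1.
Qed.

Lemma inc_eq0 Fb F : F \notin [set Fb :\ v | v in Fb] -> inc R Fb F = 0.
Proof.
rewrite /inc; case: andP => // -[FFb /eqP cardFb]; case/imsetP.
have [v vFbF] : exists v, v \in Fb :\: F.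
  by apply/set0Pn; rewrite -card_gt0 cardsD (setIidPr FFb) cardFb subSnn.
move: vFbF; rewrite inE => /andP[vF vFb]; exists v => //.
apply/eqP; rewrite eqEcard subsetD1 FFb vF /=.
by move: (cardsD1 v Fb); rewrite vFb cardFb add1n => -[<-].
Qed.

Definition coboundary g Fb : R := \sum_F inc R Fb F * g F.

Definition coboundary_adj g E : R := \sum_F inc R F E * g F.

Lemma coboundaryE g Fb :
  coboundary g Fb = \sum_(v in Fb) face_sign v Fb * g (Fb :\ v).
Proof.
rewrite /coboundary (bigID (mem [set Fb :\ v | v in Fb])) /=.
rewrite [X in _ + X]big1 ?addr0 => [|F /inc_eq0 ->]; last by rewrite mul0r.
rewrite big_imset /= => [|u v uFb vFb uv]; first by apply: eq_bigr => v /inc_setD1 ->.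
apply/eqP; apply: contraT => neq_uv; have : u \in Fb :\ v by rewrite !inE neq_uv.
by rewrite -uv !inE eqxx.
Qed.

Lemma coboundary_adjE g E :
  coboundary_adj g E = \sum_(w | w \notin E) face_sign w (w |: E) * g (w |: E).
Proof.
rewrite /coboundary_adj (bigID (mem [set w |: E | w in ~: E])) /=.
rewrite [X in _ + X]big1 ?addr0 => [|F notU1]; last first.
  rewrite inc_eq0 ?mul0r //; apply: contra notU1 => /imsetP[v vF ->].
  by apply/imsetP; exists v; rewrite ?setD1K // !inE eqxx.
rewrite big_imset /= => [|u v]; last first.
  rewrite !inE => uE vE uvE; have : u \in v |: E by rewrite -uvE setU11.
  by rewrite !inE (negbTE uE) orbF => /eqP.
apply: eq_big => [w|w]; first by rewrite inE.
by rewrite inE => wE; have := inc_setD1 (setU11 w E); rewrite setU1K // => ->.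
Qed.

Lemma big_card_succ (j : nat) (h : {set V} -> V -> R) :
  \sum_(X : {set V} | #|X| == j.+1) \sum_(v in X) h X v =
  \sum_(Y : {set V} | #|Y| == j) \sum_(v | v \notin Y) h (v |: Y) v.
Proof.
rewrite (exchange_big_dep xpredT) //= [RHS](exchange_big_dep xpredT) //=.
apply: eq_bigr => v _.
rewrite (reindex_onto (fun Y => v |: Y) (fun X => X :\ v)) /=; last first.
  by move=> X /andP[_ vX]; rewrite setD1K.
apply: eq_bigl => Y; case vY: (v \in Y).
  by rewrite andbF; apply/negbTE/nandP; right; apply/eqP => /setP/(_ v); rewrite !inE eqxx vY.
by rewrite setU1K ?vY // eqxx setU11 !andbT cardsU1 vY.
Qed.

Lemma sqr_sum_offdiag (I : finType) (P : pred I) (a : I -> R) :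
  (\sum_(i | P i) a i) ^+ 2 =
  \sum_(i | P i) a i ^+ 2 + \sum_(i | P i) \sum_(j | P j && (j != i)) a i * a j.
Proof.
rewrite expr2 big_distrl -big_split /=; apply: eq_bigr => i Pi.
by rewrite big_distrr /= (bigD1 i) //= expr2.
Qed.

Lemma coboundary_cross_cancel n g :
  \sum_(Fb : {set V} | #|Fb| == n.+2) \sum_(v in Fb) \sum_(u | (u \in Fb) && (u != v))
    face_sign v Fb * g (Fb :\ v) * (face_sign u Fb * g (Fb :\ u)) =
  - \sum_(E : {set V} | #|E| == n) \sum_(w | w \notin E) \sum_(v | (v \notin E) && (v != w))
    face_sign w (w |: E) * g (w |: E) * (face_sign v (v |: E) * g (v |: E)).
Proof.
pose a Fb v := face_sign v Fb * g (Fb :\ v).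
rewrite (big_card_succ n.+1 (fun X v => \sum_(u | (u \in X) && (u != v)) a X v * a X u)).
rewrite (eq_bigr (fun Y => \sum_(u in Y) \sum_(v | v \notin Y) a (v |: Y) v * a (v |: Y) u)).
  rewrite (big_card_succ n (fun X u => \sum_(v | v \notin X) a (v |: X) v * a (v |: X) u)).
  rewrite -sumrN; apply: eq_bigr => E _; rewrite -sumrN; apply: eq_bigr => u uE.
  rewrite -sumrN (eq_bigl (fun v => (v \notin E) && (v != u))) => [|v]; last first.
    by rewrite !inE negb_or andbC.
  apply: eq_bigr => v /andP[vE vu]; have uv : u != v by rewrite eq_sym.
  have vuE : v \notin u |: E by rewrite !inE negb_or vu vE.
  rewrite /a (setU1K vuE); have -> : (v |: (u |: E)) :\ u = v |: E.
    by apply/setP => x; rewrite !inE; case: eqVneq => [->|]; rewrite ?(negbTE uv) ?(negbTE uE).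
  by rewrite mulrACA face_sign_swap // mulNr mulrACA.
move=> Y _; rewrite exchange_big /=; apply: eq_bigr => v vY.
apply: eq_bigl => u; rewrite !inE.
by case: (eqVneq u v) => [->|] //=; rewrite ?andbT // (negbTE vY).
Qed.

(* On the full simplex over [V], L_up + L_down = |V| I. *)
Lemma sum_sqr_coboundary_add n g :
  \sum_(Fb : {set V} | #|Fb| == n.+2) coboundary g Fb ^+ 2 +
  \sum_(E : {set V} | #|E| == n) coboundary_adj g E ^+ 2 =
  #|V|%:R * \sum_(F : {set V} | #|F| == n.+1) g F ^+ 2.
Proof.
under eq_bigr do rewrite coboundaryE sqr_sum_offdiag.
under [X in _ + X]eq_bigr do rewrite coboundary_adjE sqr_sum_offdiag.
rewrite !big_split /= coboundary_cross_cancel addrACA addNr addr0.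
under eq_bigr do under eq_bigr do rewrite exprMn face_sign_sqr mul1r.
under [X in _ + X]eq_bigr do under eq_bigr do rewrite exprMn face_sign_sqr mul1r.
rewrite (big_card_succ n.+1 (fun X v => g (X :\ v) ^+ 2)).
rewrite -(big_card_succ n (fun X _ => g X ^+ 2)).
rewrite -big_split big_distrr /=; apply: eq_bigr => Y _.
under eq_bigr => v vY do rewrite setU1K //.
rewrite !sumr_const -mulrnDr mulr_natl; congr (_ *+ _).
by rewrite -(cardsC Y) addnC; apply: congr1; apply: eq_card => v; rewrite inE.
Qed.

Lemma sum_sqr_coboundary_le n g :
  \sum_(Fb : {set V} | #|Fb| == n.+2) coboundary g Fb ^+ 2 <=
  #|V|%:R * \sum_(F : {set V} | #|F| == n.+1) g F ^+ 2.
Proof.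
rewrite -sum_sqr_coboundary_add lerDl; apply: sumr_ge0 => E _; exact: sqr_ge0.
Qed.

Definition gram (C : {set {set V}}) F G : R := \sum_(Fb in C) inc R Fb F * inc R Fb G.

Definition inc_mx (C S : {set {set V}}) : 'M[R]_(#|C|, #|S|) :=
  \matrix_(c, a) inc R (enum_val c) (enum_val a).

Lemma kernel_mx_gram C S : kernel_mx (gram C) S = (inc_mx C S)^T *m inc_mx C S.
Proof.
apply/matrixP => a b; rewrite !mxE /gram big_enum_val.
by apply: eq_bigr => c _; rewrite !mxE.
Qed.

Section Cochains.
Variables (S : {set {set V}}) (r : 'rV[R]_#|S|).

(* Extension by zero of the row vector [r], indexed by [S], to all subsets of [V]. *)
Definition cochain_of_row F : R := \sum_(a : 'I_#|S| | enum_val a == F) r 0 a.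

Lemma cochain_of_row_val (a : 'I_#|S|) : cochain_of_row (enum_val a) = r 0 a.
Proof. by rewrite /cochain_of_row (big_pred1 a) // => b; rewrite (inj_eq enum_val_inj). Qed.

Lemma cochain_of_row_out F : F \notin S -> cochain_of_row F = 0.
Proof.
move=> FS; rewrite /cochain_of_row big_pred0 // => b.
by apply: contraNF FS => /eqP <-; exact: enum_valP.
Qed.

Lemma coboundary_cochain_of_row Fb :
  coboundary cochain_of_row Fb = \sum_(a : 'I_#|S|) r 0 a * inc R Fb (enum_val a).
Proof.
rewrite /coboundary /cochain_of_row; under eq_bigr do rewrite big_distrr.
rewrite (exchange_big_dep xpredT) //=; apply: eq_bigr => a _.
by rewrite (big_pred1 (enum_val a)) 1?mulrC // => F; rewrite /= eq_sym.
Qed.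

Lemma sum_sqr_cochain_of_row n : (forall F, F \in S -> #|F| == n.+1) ->
  \sum_(F : {set V} | #|F| == n.+1) cochain_of_row F ^+ 2 = (r *m r^T) 0 0.
Proof.
move=> S_card; rewrite mxE (eq_bigr (fun a => cochain_of_row (enum_val a) ^+ 2)); last first.
  by move=> a _; rewrite mxE cochain_of_row_val expr2.
rewrite -(big_enum_val (fun F => cochain_of_row F ^+ 2)) [LHS]big_mkcond [RHS]big_mkcond.
apply: eq_bigr => F _; case: (boolP (F \in S)) => FS; first by rewrite S_card.
by rewrite cochain_of_row_out // expr0n if_same.
Qed.

Lemma gram_form (C : {set {set V}}) :
  (r *m kernel_mx (gram C) S *m r^T) 0 0 = \sum_(Fb in C) coboundary cochain_of_row Fb ^+ 2.
Proof.
rewrite kernel_mx_gram mulmxA -mulmxA -[inc_mx C S *m _]trmxK trmx_mul trmxK mxE.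
rewrite (big_enum_val (fun Fb => coboundary cochain_of_row Fb ^+ 2)); apply: eq_bigr => c _.
rewrite coboundary_cochain_of_row expr2 !mxE.
by congr (_ * _); apply: eq_bigr => a _; rewrite !mxE.
Qed.

End Cochains.

Lemma eigenvalue_gram_range n (C S : {set {set V}}) x :
  (forall Fb, Fb \in C -> #|Fb| == n.+2) -> (forall F, F \in S -> #|F| == n.+1) ->
  eigenvalue (kernel_mx (gram C) S) x -> 0 <= x <= #|V|%:R.
Proof.
move=> C_card S_card; apply: eigenvalue_form_bounds => u.
rewrite gram_form -(@sum_sqr_cochain_of_row S u n S_card).
rewrite sumr_ge0 => [|Fb _]; last exact: sqr_ge0.
apply: le_trans (sum_sqr_coboundary_le _ _); rewrite [leRHS]big_mkcond [leLHS]big_mkcond.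
apply: ler_sum => Fb _; case: ifP => [/C_card -> //|_]; case: ifP => // _; exact: sqr_ge0.
Qed.

End FullSimplex.

Lemma faces_subset (V : finType) (K H : {set {set V}}) j :
  H \subset K -> faces H j \subset faces K j.
Proof. by move=> HK; apply/subsetP => F; rewrite !inE => /andP[/(subsetP HK) -> ->]. Qed.

Lemma faces_neq0 (V : finType) (K : {set {set V}}) j F : F \in faces K j -> F != set0.
Proof. by rewrite inE => /andP[_]; apply: contraTneq => ->; rewrite cards0. Qed.

Lemma inc_notsubset (R : nzRingType) (V : finType) (Fb F : {set V}) :
  ~~ (F \subset Fb) -> inc R Fb F = 0.
Proof. by rewrite /inc => /negbTE ->. Qed.

Lemma dim_cohom_top (R : fieldType) (V : finType) (H : {set {set V}}) n :
  has_dim H n.+1 -> (#|faces H n.+1| - dim_cohom R H n)%N = \rank (cobound_mx R H n).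
Proof.
move=> [H_card _]; have no_faces : #|faces H n.+2| = 0%N.
  apply: eq_card0 => F; rewrite !inE; apply/negP => /andP[/H_card FH /eqP cF].
  by rewrite cF ltnn in FH.
have rank0 : \rank (cobound_mx R H n.+1) = 0%N.
  by apply/eqP; rewrite -leqn0 -no_faces rank_leq_row.
by rewrite /dim_cohom rank0 subn0 subKn // rank_leq_row.
Qed.

Lemma up_laplacian_unit (R : realFieldType) (V : finType) (K : {set {set V}}) w n :
  (forall F, w F = 1) -> up_laplacian K w n = kernel_mx (gram R (faces K n.+1)) (faces K n).
Proof.
move=> w1; apply/matrixP => a b; rewrite !mxE /= w1 oner_eq0 /=.
by apply: eq_bigr => Fb _; rewrite !w1 divr1 mul1r.
Qed.

Section ProperDifference.
Variables (R : realFieldType) (V : finType) (n : nat) (K H : {set {set V}}).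
Implicit Types (F G Fb : {set V}).
Hypotheses (HK : H \subset K)
  (H_closed : forall Fb F, Fb \in H -> F \subset Fb -> F != set0 -> F \in H)
  (L_closed : forall Fb F, Fb \in K -> Fb \notin H -> F \subset Fb -> F != set0 -> F \notin H).

Local Notation S := (faces K n).
Local Notation S1 := (faces H n).
Local Notation S2 := (faces K n :\: faces H n).
Local Notation gramK := (gram R (faces K n.+1)).

Lemma face_not_in_H F : F \in S2 -> F \notin H.
Proof. by rewrite !inE => /andP[notS1 /andP[_ cF]]; apply: contra notS1 => ->. Qed.

Lemma inc_cross Fb F G : Fb \in K -> F \in S1 -> G \in S2 ->
  inc R Fb F * inc R Fb G = 0.
Proof.
move=> FbK FS1 GS2.
have [FFb|/inc_notsubset ->] := boolP (F \subset Fb); last by rewrite mul0r.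
have [GFb|/inc_notsubset ->] := boolP (G \subset Fb); last by rewrite mulr0.
have GS : G \in S by move: GS2; rewrite inE => /andP[].
have [FbH|FbH] := boolP (Fb \in H).
  by have := face_not_in_H GS2; rewrite (H_closed FbH GFb) ?(faces_neq0 GS).
have := L_closed FbK FbH FFb (faces_neq0 FS1).
by move: FS1; rewrite inE => /andP[->].
Qed.

Lemma gramC (C : {set {set V}}) F G : gram R C F G = gram R C G F.
Proof. by apply: eq_bigr => Fb _; rewrite mulrC. Qed.

Lemma gram_cross F G : F \in S1 -> G \in S2 -> gramK F G = 0.
Proof.
by move=> FS1 GS2; apply: big1 => Fb; rewrite inE => /andP[FbK _]; rewrite inc_cross.
Qed.

Lemma gram_on_H F G : F \in S1 -> gramK F G = gram R (faces H n.+1) F G.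
Proof.
move=> FS1; rewrite /gram (big_setID (faces H n.+1)) /= (setIidPr (faces_subset _ HK)).
rewrite [X in _ + X]big1 ?addr0 // => Fb; rewrite !inE => /andP[notH /andP[FbK cFb]].
have FbH : Fb \notin H by apply: contra notH => ->.
rewrite inc_notsubset ?mul0r //; apply/negP => FFb.
by have := L_closed FbK FbH FFb (faces_neq0 FS1); move: FS1; rewrite inE => /andP[->].
Qed.

Variables (wK wL : {set V} -> R).
Hypotheses (wK1 : forall F, wK F = 1) (wL_H : forall F, wL F = if F \in H then 0 else 1).

Lemma char_poly_up_laplacian_K :
  char_poly (up_laplacian K wK n) =
  char_poly (kernel_mx (gram R (faces H n.+1)) S1) * char_poly (kernel_mx gramK S2).
Proof.
rewrite up_laplacian_unit // (char_poly_kernel_mx_split (S1 := S1)) ?faces_subset //.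
  by congr (char_poly _ * _); apply: eq_kernel_mx => F G FS1 _; exact: gram_on_H.
by move=> F G FS1 GS2; rewrite [gramK G F]gramC gram_cross.
Qed.

Lemma char_poly_up_laplacian_L :
  char_poly (up_laplacian K wL n) =
  \prod_(x <- nseq #|S1| 0) ('X - x%:P) * char_poly (kernel_mx gramK S2).
Proof.
pose PhiL F G := if F \in H then 0 else gramK F G.
have -> : up_laplacian K wL n = kernel_mx PhiL S.
  apply/matrixP => a b; rewrite !mxE /= /PhiL wL_H.
  have [FH|FH] := boolP (enum_val a \in H); first by rewrite eqxx.
  rewrite oner_eq0 /=; apply: eq_bigr => Fb _.
  have [FbH|FbH] := boolP (Fb \in H); last by rewrite wL_H (negbTE FbH) divr1 mul1r.
  rewrite inc_notsubset ?mulr0 ?mul0r //; apply: contra FH => /(H_closed FbH).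
  by apply; apply: faces_neq0 (enum_valP a).
rewrite (char_poly_kernel_mx_split (S1 := S1)) ?faces_subset //; last first.
  move=> F G FS1 GS2; rewrite /PhiL (negbTE (face_not_in_H GS2)) [gramK G F]gramC.
  by rewrite gram_cross //; move: FS1; rewrite inE => /andP[->].
congr (_ * _).
  rewrite -char_poly0; congr char_poly; apply/matrixP => a b; rewrite !mxE /PhiL.
  by have := enum_valP a; rewrite inE => /andP[->].
congr char_poly; apply: eq_kernel_mx => F G FS2 _.
by rewrite /PhiL (negbTE (face_not_in_H FS2)).
Qed.

Lemma up_laplacian_spectra (lam theta : 'I_#|S| -> R) :
  char_poly (up_laplacian K wK n) = \prod_(i < #|S|) ('X - (lam i)%:P) ->
  char_poly (up_laplacian K wL n) = \prod_(i < #|S|) ('X - (theta i)%:P) ->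
  exists as_ bs, [/\ perm_eq [seq lam i | i <- enum 'I_#|S|] (as_ ++ bs),
    perm_eq [seq theta i | i <- enum 'I_#|S|] (nseq #|S1| 0 ++ bs),
    size as_ = #|S1|, (#|S1| - \rank (cobound_mx R H n) <= count_mem 0%R as_)%N &
    {in bs, forall x, 0 <= x <= #|V|%:R}].
Proof.
set A := kernel_mx (gram R (faces H n.+1)) S1; set M := kernel_mx gramK S2.
have prod_enum (f : 'I_#|S| -> R) : \prod_(i < #|S|) ('X - (f i)%:P) =
    \prod_(x <- [seq f i | i <- enum 'I_#|S|]) ('X - x%:P) by rewrite big_map big_enum.
rewrite !prod_enum char_poly_up_laplacian_K => lamE thetaE.
have [as_ [bs [AE ME lam_perm]]] :=
  prod_XsubC_split (char_poly_monic A) (char_poly_monic M) lamE.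
exists as_, bs; split => //.
- by apply: prod_XsubC_eq; rewrite -thetaE char_poly_up_laplacian_L -/M ME big_cat.
- by have := size_char_poly A; rewrite AE size_prod_XsubC => -[].
- rewrite -mu_prod_XsubC -AE mup_geq ?monic_neq0 ?char_poly_monic // subr0.
  apply: dvdp_trans (char_poly_dvd_rank _); rewrite dvdp_exp2l // leq_sub2l //.
  (* [cobound_mx R H n] is convertible to [inc_mx (faces H n.+1) (faces H n)]. *)
  by rewrite /A kernel_mx_gram mxrankM_maxr.
- move=> x; rewrite -root_prod_XsubC -ME -eigenvalue_root_char.
  apply: (eigenvalue_gram_range (n := n)) => [Fb|F]; first by rewrite inE => /andP[].
  by rewrite !inE => /and3P[].
Qed.

End ProperDifference.

Theorem theorem2p10 (R : realFieldType) (V : finType) (n : nat)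
  (K H : {set {set V}})
  (wK wH wL : {set V} -> R)
  (lam theta : 'I_#|faces K n| -> R) :
  is_complex K -> has_dim K n.+1 -> (forall v : V, [set v] \in K) ->
  (forall F, wK F = 1) ->
  is_complex H -> H \subset K -> has_dim H n.+1 ->
  (forall F, wH F = if F \in H then 1 else 0) ->
  (forall F, wL F = wK F - wH F) ->
  is_complex [set F in K | 0 < wL F] ->
  sorted_eigs (up_laplacian K wK n) lam ->
  sorted_eigs (up_laplacian K wL n) theta ->
  let DW := (#|faces H n.+1| - dim_cohom R H n)%N in
  let DH := #|faces H n| in
  forall k : 'I_#|faces K n|,
    ext_eig lam 0 (k.+1%:Z - DW%:Z) <= theta k
    /\ theta k <= ext_eig lam (#|V|%:R) (k.+1%:Z + DH%:Z).
Proof.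
move=> _ _ _ wK1 [_ H_closed] HK dimH wHE wLE [_ L_closed].
move=> [lamE lam_sorted] [thetaE theta_sorted] DW DH k.
have wL_H F : wL F = if F \in H then 0 else 1.
  by rewrite wLE wK1 wHE; case: ifP; rewrite ?subrr ?subr0.
have L_closed_H (Fb F : {set V}) :
    Fb \in K -> Fb \notin H -> F \subset Fb -> F != set0 -> F \notin H.
  move=> FbK FbH FFb F0; have := L_closed Fb F; rewrite !inE FbK !wL_H (negbTE FbH) ltr01.
  by case/(_ isT FFb F0)/andP => _; case: (F \in H); rewrite ?ltxx.
have [as_ [bs [lam_perm theta_perm size_as zeros_as bs_range]]] :=
  up_laplacian_spectra HK H_closed L_closed_H wK1 wL_H lamE thetaE.
rewrite /DW dim_cohom_top //; split.
  exact: interlacing_lower lam_sorted theta_sorted lam_perm theta_perm bs_range _ zeros_as.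
exact: interlacing_upper lam_sorted theta_sorted lam_perm theta_perm bs_range size_as _
  (ler0n _ _).
Qed.
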